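(* Let $G\le\operatorname{Homeo}(\mathfrak{C})$ be vigorous and approximately full. Let $C\in K_{\mathfrak{C}}$ and let $\Gamma\subseteq G$ be finite such that for $\gamma_1,\gamma_2\in\Gamma$, $C\gamma_1\cap C\gamma_2\neq\varnothing$ implies $\gamma_1=\gamma_2$. Let $g$ be a permutation of $\Gamma$, and let $\delta\in\operatorname{Homeo}(\mathfrak{C})$ be such that $\operatorname{supp}(\delta)\subseteq\bigcup_{\gamma\in\Gamma}C\gamma$ and, for each $\gamma\in\Gamma$, $\delta$ agrees with $\gamma^{-1}(\gamma g)$ on $C\gamma$ (i.e. $p\delta=(p\gamma^{-1})(\gamma g)$ for $p\in C\gamma$). If $O_G(C)$ is an even element of $(\mathcal{O}(G),+)$ or $g$ is an even permutation, then $\delta\in G$.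
   Context: $\mathfrak{C}$ denotes a Cantor space (a space homeomorphic to $\{0,1\}^\omega$). Groups of homeomorphisms act on the right, products composed left to right. $K_{\mathfrak{C}}$ denotes the set of non-empty proper clopen subsets of $\mathfrak{C}$. For $\gamma\in\operatorname{Homeo}(\mathfrak{C})$, $\operatorname{supp}(\gamma)=\{p\in\mathfrak{C}: p\gamma\neq p\}$. A subset $S\subseteq \operatorname{Homeo}(\mathfrak{C})$ is vigorous if for all clopen $A,B,C\subseteq\mathfrak{C}$ with $B,C$ non-empty proper subsets of $A$ there is $\gamma\in S$ with $\operatorname{supp}(\gamma)\subseteq A$ and $B\gamma\subseteq C$. $G$ is approximately full if whenever $\Gamma\subseteq G$ is finite, $\{D_\gamma\}_{\gamma\in\Gamma}$ is a partition of $\mathfrak{C}$ into clopen sets such that $\{D_\gamma\gamma\}_{\gamma\in\Gamma}$ is also a partition of $\mathfrak{C}$, and $\delta\in\Gamma$, there exists $\chi\in G$ with $\chi|_{D_\gamma}=\gamma|_{D_\gamma}$ for every $\gamma\in\Gamma\setminus\{\delta\}$. For $B\in K_{\mathfrak{C}}$, $O_G(B):=\{B\gamma:\gamma\in G\}$, and $\mathcal{O}(G):=\{O_G(B): B\in K_{\mathfrak{C}}\}$; it is an abelian group under $O_G(U)+O_G(V):=O_G(U\mu\cup V\nu)$, where $\mu,\nu\in G$ are any elements with $U\mu\cap V\nu=\varnothing$ and $U\mu\cup V\nu\neq\mathfrak{C}$. An element $x\in\mathcal{O}(G)$ is even if $x=y+y$ for some $y\in\mathcal{O}(G)$. *)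

From HB Require Import structures.
From mathcomp Require Import all_boot all_order all_algebra.
From mathcomp Require Import fingroup perm.
From mathcomp Require Import all_classical all_reals all_analysis.
Set Implicit Arguments. Unset Strict Implicit. Unset Printing Implicit Defensive.
Local Open Scope classical_set_scope.

(* Homeomorphisms act on the right:
   p gamma is written (gamma p), B gamma is (gamma @` B), and the product
   gamma1 gamma2 (first gamma1, then gamma2) is (gamma2 \o gamma1). *)
Notation CS := cantor_space.

Definition homeo (f : CS -> CS) : Prop :=
  exists g : CS -> CS, cancel f g /\ cancel g f /\ continuous f /\ continuous g.

Definition supp (f : CS -> CS) : set CS := [set p | f p <> p].

Definition KC (A : set CS) : Prop := clopen A /\ A !=set0 /\ A <> setT.

Definition homeo_subgroup (G : set (CS -> CS)) : Prop :=
  (forall f, G f -> homeo f) /\ G id /\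
  (forall f g, G f -> G g -> G (g \o f)) /\
  (forall f, G f -> exists2 g, G g & cancel f g /\ cancel g f).

Definition vigorous (S : set (CS -> CS)) : Prop :=
  forall A B C : set CS, clopen A -> clopen B -> clopen C ->
    B !=set0 -> B `<=` A -> B <> A ->
    C !=set0 -> C `<=` A -> C <> A ->
    exists2 g, S g & supp g `<=` A /\ g @` B `<=` C.

(* A finite subset Gamma of G is given as an injective enumeration
   gam : 'I_n -> (CS -> CS); D i is the block D_{gam i}. *)
Definition approximately_full (G : set (CS -> CS)) : Prop :=
  forall (n : nat) (gam : 'I_n -> (CS -> CS)) (D : 'I_n -> set CS) (d : 'I_n),
    injective gam -> (forall i, G (gam i)) ->
    (forall i, clopen (D i) /\ D i !=set0) ->
    (forall i j, i <> j -> D i `&` D j = set0) ->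
    \bigcup_i D i = setT ->
    (forall i j, i <> j -> gam i @` D i `&` gam j @` D j = set0) ->
    \bigcup_i (gam i @` D i) = setT ->
    exists2 chi, G chi & forall i, i <> d -> forall p, D i p -> chi p = gam i p.

Definition orbitG (G : set (CS -> CS)) (B : set CS) : set (set CS) :=
  [set g @` B | g in G].

Definition orbit_sum (G : set (CS -> CS)) (x y z : set (set CS)) : Prop :=
  exists U V (mu nu : CS -> CS),
    [/\ KC U, KC V, G mu & G nu] /\
    [/\ x = orbitG G U, y = orbitG G V,
        mu @` U `&` nu @` V = set0, mu @` U `|` nu @` V <> setT &
        z = orbitG G (mu @` U `|` nu @` V)].

Definition orbit_even (G : set (CS -> CS)) (x : set (set CS)) : Prop :=
  exists2 B, KC B & orbit_sum G (orbitG G B) (orbitG G B) x.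

From HB Require Import structures.
From mathcomp Require Import all_boot all_order all_algebra.
From mathcomp Require Import fingroup perm.
From mathcomp Require Import all_classical all_reals all_analysis.
Set Implicit Arguments. Unset Strict Implicit. Unset Printing Implicit Defensive.
Local Open Scope classical_set_scope.

(* delta is the "block permutation" of g: the blocks C gamma are pairwise
   disjoint and delta maps C gamma onto C (gamma g) along gamma^-1 (gamma g),
   fixing every other point.  The development follows the paper:
   - a block transposition agrees, off any free clopen set W, with an element
     of G (approximate fullness applied to four pieces, vigour providing a
     non-trivial element supported in W);
   - a commutator of two such transpositions lies in G, the errors supported
     in two disjoint free sets cancelling; splitting the base set into two
     halves, each half gives free room to the other, so block 3-cycles lie in G;
   - 3-cycles generate the even permutations, so even block permutations lie
     in G, which settles the case of an even g;
   - if O_G(C) is even, C is the disjoint union of two translates of a set B,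
     and delta is the block permutation over B of the doubling of g to
     Gamma x {0,1}, which is always even. *)

Lemma disj_false (A B : set CS) (x : CS) : A `&` B = set0 -> A x -> B x -> False.
Proof. by move=> AB0 Ax Bx; have : (A `&` B) x by []; rewrite AB0. Qed.

Lemma image_disj (f : CS -> CS) (A B : set CS) :
  injective f -> A `&` B = set0 -> f @` A `&` f @` B = set0.
Proof.
move=> f_inj AB0; apply/seteqP; split=> // _ [[a Aa <-] [b Bb /f_inj ba]].
by rewrite ba in Bb; exact: disj_false AB0 Aa Bb.
Qed.

Lemma supp_fix (f : CS -> CS) (S : set CS) (x : CS) :
  supp f `<=` S -> ~ S x -> f x = x.
Proof. by move=> fS Sx; apply: contrapT => /fS. Qed.

Lemma fix_supp (f : CS -> CS) (S : set CS) :
  (forall x, ~ S x -> f x = x) -> supp f `<=` S.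
Proof. by move=> fS x fx; apply: contrapT => /fS. Qed.

Lemma supp_stable (f : CS -> CS) (S : set CS) (x : CS) :
  injective f -> supp f `<=` S -> S x -> S (f x).
Proof.
move=> f_inj fS Sx; apply: contrapT => Sfx.
by have /f_inj fxx := supp_fix fS Sfx; rewrite fxx in Sfx.
Qed.

Lemma supp_image (f f' : CS -> CS) (S : set CS) :
  cancel f f' -> cancel f' f -> supp f `<=` S -> f @` S = S.
Proof.
move=> ff' f'f fS; apply/seteqP; split=> [_ [x Sx <-]|x Sx].
  exact: supp_stable (can_inj ff') fS Sx.
exists (f' x); last exact: f'f.
by apply: contrapT => Sf'x; move: Sx; rewrite -(f'f x) (supp_fix fS Sf'x).
Qed.

Lemma disjoint_supp_commute (f g : CS -> CS) (S S' : set CS) :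
  injective f -> injective g -> supp f `<=` S -> supp g `<=` S' ->
  S `&` S' = set0 -> forall x, f (g x) = g (f x).
Proof.
move=> f_inj g_inj fS gS' SS'0 x.
have [Sx|Sx] := pselect (S x).
  have S'x y : S y -> ~ S' y by move=> Sy /(disj_false SS'0 Sy).
  by rewrite (supp_fix gS' (S'x _ Sx)) (supp_fix gS' (S'x _ (supp_stable f_inj fS Sx))).
rewrite (supp_fix fS Sx); have [S'x|S'x] := pselect (S' x).
  by rewrite (supp_fix fS) // => Sgx; exact: disj_false SS'0 Sgx (supp_stable g_inj gS' S'x).
by rewrite (supp_fix gS' S'x) (supp_fix fS Sx).
Qed.

Lemma homeo_clopen (f : CS -> CS) (A : set CS) : homeo f -> clopen A -> clopen (f @` A).
Proof.
case=> g [fg [gf [cf cg]]] [oA cA].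
have -> : f @` A = g @^-1` A.
  apply/seteqP; split=> x; first by case=> a Aa <-; rewrite /preimage /= fg.
  by move=> Agx; exists (g x) => //; exact: gf.
split; first by apply: open_comp => // y _; exact: cg.
exact: (proj1 (continuous_closedP _) cg).
Qed.

(* The Cantor space is perfect and zero-dimensional, so every non-empty
   clopen set is the disjoint union of two non-empty clopen sets. *)
Lemma clopen_split (W : set CS) : clopen W -> W !=set0 ->
  exists W1 W2, [/\ clopen W1, clopen W2, W1 !=set0 & W2 !=set0] /\
     (W1 `&` W2 = set0 /\ W1 `|` W2 = W).
Proof.
move=> [oW cW] [p Wp].
have [y [yp _ Wy]] : exists y, [/\ y != p, [set: CS] y & W y].
  have lp : limit_point [set: CS] p by rewrite (proj2 cantor_perfect).
  by apply: lp; apply: open_nbhs_nbhs.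
have [U [cU Up nUy]] : exists U, [/\ clopen U, U p & ~ U y].
  by apply: cantor_zero_dimensional; rewrite eq_sym.
exists (W `&` U), (W `&` ~` U); split; first split.
- exact: clopenI.
- by apply: clopenI => //; apply: clopenC.
- by exists p.
- by exists y.
split; first by apply/seteqP; split=> x // [[_ ?] [_ ?]].
by rewrite -setIUr setUCr setIT.
Qed.

Section Permutations.
Local Open Scope group_scope.

(* The 3-cycle (a b)(a c) equals ((a c)(a b))^2, the commutator of the two
   transpositions (a c) and (a b). *)
Lemma tperm_cycle (I : finType) (a b c : I) : a != b -> a != c -> b != c ->
  tperm a b * tperm a c = tperm a c * tperm a b * tperm a c * tperm a b.
Proof.
move=> ab ac bc.
have conj_ac : tperm a b ^ tperm a c = tperm c b.
  by rewrite tpermJ tpermL tpermD // eq_sym.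
have conj_ab : tperm c b ^ tperm a b = tperm a c.
  by rewrite tpermJ tpermR tpermD 1?tpermC // eq_sym.
have -> : tperm a c * tperm a b * tperm a c = tperm c b.
  by rewrite -conj_ac conjgE tpermV mulgA.
by rewrite [RHS]conjgC conj_ab.
Qed.

Lemma even_perm_ind (I : finType) (P : {perm I} -> Prop) :
  P 1 -> (forall s t, P s -> P t -> P (s * t)) ->
  (forall a b c, a != b -> a != c -> b != c -> P (tperm a b * tperm a c)) ->
  forall s, ~~ odd_perm s -> P s.
Proof.
move=> P1 PM P3.
have Ppair a b c d : a != b -> c != d -> P (tperm a b * tperm c d).
  (* a product of two transpositions is trivial, a 3-cycle, or a product of
     two 3-cycles *)
  move=> ab cd; have [ac|ac] := eqVneq a c.
    rewrite -ac in cd *; have [<-|bd] := eqVneq b d; first by rewrite tperm2.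
    exact: P3.
  have [bc|bc] := eqVneq b c.
    rewrite -bc tpermC in cd *; have [<-|ad] := eqVneq a d; first by rewrite tperm2.
    by apply: P3; rewrite // eq_sym.
  have [<-|ad] := eqVneq a d; first by rewrite (tpermC c a); apply: P3.
  have [<-|bd] := eqVneq b d.
    by rewrite (tpermC a b) (tpermC c b); apply: P3; rewrite // eq_sym.
  have -> : tperm a b * tperm c d = (tperm a b * tperm a c) * (tperm c a * tperm c d).
    by rewrite (tpermC c a) -mulgA (mulgA (tperm a c)) tperm2 mul1g.
  by apply: PM; apply: P3; rewrite // eq_sym.
(* a product of an even number of transpositions, peeled off two at a time *)
have Pprod (ts : seq (I * I)) : all perm.dpair ts ->
    (~~ odd (size ts) -> P (\prod_(t <- ts) tperm t.1 t.2)) /\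
    (odd (size ts) -> forall a b, a != b -> P (tperm a b * \prod_(t <- ts) tperm t.1 t.2)).
  elim: ts => [|[c d] ts IHts] /=; first by rewrite big_nil.
  case/andP=> cd /IHts [IHeven IHodd]; rewrite big_cons /=; split.
    by rewrite negbK => odd_ts; exact: IHodd.
  by move=> even_ts a b ab; rewrite mulgA; apply: PM (Ppair _ _ _ _ ab cd) (IHeven even_ts).
move=> s; case: (prod_tpermP s) => ts -> dts.
by rewrite odd_perm_prod // => /(proj1 (Pprod ts dts)).
Qed.

End Permutations.

(* A permutation s of I acting on two copies I * bool of I; the doubled
   permutation is even whatever the parity of s. *)
Section PairPerm.
Local Open Scope group_scope.
Variable I : finType.

Definition pair_perm_fun (s : {perm I}) (ic : I * bool) : I * bool := (s ic.1, ic.2).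

Lemma pair_perm_inj (s : {perm I}) : injective (pair_perm_fun s).
Proof. by move=> [i c] [j d] [/perm_inj -> ->]. Qed.

Definition pair_perm (s : {perm I}) : {perm I * bool} := perm (@pair_perm_inj s).

Lemma pair_permE (s : {perm I}) (i : I) (c : bool) : pair_perm s (i, c) = (s i, c).
Proof. by rewrite permE. Qed.

Lemma pair_permM (s t : {perm I}) : pair_perm (s * t) = pair_perm s * pair_perm t.
Proof. by apply/permP => -[i c]; rewrite !permM !pair_permE permM. Qed.

Lemma pair_perm_tperm (a b : I) :
  pair_perm (tperm a b) = tperm (a, false) (b, false) * tperm (a, true) (b, true).
Proof.
have copy_tperm c i : tperm (a, c) (b, c) (i, c) = (tperm a b i, c).
  by rewrite -(inj_tperm _ _ _ (_ : injective (fun j => (j, c)))) // => j k [].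
have other_copy c i : tperm (a, ~~ c) (b, ~~ c) (i, c) = (i, c).
  by case: c; rewrite tpermD // xpair_eqE andbF.
apply/permP => -[i c]; rewrite permM pair_permE.
by case: c; rewrite ?copy_tperm ?(other_copy true) ?(other_copy false) ?copy_tperm.
Qed.

Lemma pair_perm_even (s : {perm I}) : ~~ odd_perm (pair_perm s).
Proof.
case: (prod_tpermP s) => ts -> _; elim: ts => [|[a b] ts IHts].
  rewrite big_nil; have -> : pair_perm 1 = 1 by apply/permP => -[i c]; rewrite pair_permE !perm1.
  by rewrite odd_perm1.
rewrite big_cons pair_permM pair_perm_tperm -mulgA !odd_mul_tperm /= !xpair_eqE !andbT.
by rewrite addbA addbb.
Qed.
End PairPerm.

Definition sel4 {T : Type} (a b c d : T) (i : 'I_4) : T := nth a [:: a; b; c; d] i.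

Lemma sel4_pairwise {T : Type} (R : T -> T -> Prop) (a b c d : T) :
  (forall x y, R x y -> R y x) ->
  R a b -> R a c -> R a d -> R b c -> R b d -> R c d ->
  forall i j : 'I_4, i <> j -> R (sel4 a b c d i) (sel4 a b c d j).
Proof.
move=> Rsym ab ac ad bc bd cd [[|[|[|[|i]]]] Hi] [[|[|[|[|j]]]] Hj] //= ij;
  rewrite /sel4 /=; by [ exfalso; apply: ij; apply: val_inj | auto ].
Qed.

Lemma bigcup_sel4 (A1 A2 A3 A4 : set CS) :
  \bigcup_i sel4 A1 A2 A3 A4 i = A1 `|` A2 `|` A3 `|` A4.
Proof.
apply/seteqP; split=> [x [[[|[|[|[|i]]]] Hi] _ Ax]|x [[[A1x|A2x]|A3x]|A4x]] //.
- by left; left; left.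
- by left; left; right.
- by left; right.
- by right.
- by exists (@Ordinal 4 0 isT).
- by exists (@Ordinal 4 1 isT).
- by exists (@Ordinal 4 2 isT).
- by exists (@Ordinal 4 3 isT).
Qed.

Definition partition4 (A1 A2 A3 A4 : set CS) : Prop :=
  [/\ [/\ A1 `&` A2 = set0, A1 `&` A3 = set0 & A1 `&` A4 = set0],
      A2 `&` A3 = set0, A2 `&` A4 = set0, A3 `&` A4 = set0 &
      A1 `|` A2 `|` A3 `|` A4 = setT].

Lemma partition4_sel4 (A1 A2 A3 A4 : set CS) : partition4 A1 A2 A3 A4 ->
  (forall i j, i <> j -> sel4 A1 A2 A3 A4 i `&` sel4 A1 A2 A3 A4 j = set0) /\
  \bigcup_i sel4 A1 A2 A3 A4 i = setT.
Proof.
case=> [[d12 d13 d14] d23 d24 d34 cover]; split; last by rewrite bigcup_sel4.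
move=> i j ij; apply: (sel4_pairwise (R := fun A B => A `&` B = set0) _ d12 d13 d14 d23 d24 d34 ij).
by move=> A B; rewrite setIC.
Qed.

Lemma partition4_compl (A1 A2 A3 : set CS) :
  A1 `&` A2 = set0 -> A1 `&` A3 = set0 -> A2 `&` A3 = set0 ->
  partition4 A1 A2 A3 (~` (A1 `|` A2 `|` A3)).
Proof.
move=> d12 d13 d23; split=> //; last by rewrite setUv.
- split=> //; apply/seteqP; split=> // x [Ax]; apply; by left; left.
- by apply/seteqP; split=> // x [Ax]; apply; left; right.
- by apply/seteqP; split=> // x [Ax]; apply; right.
Qed.

Lemma partition4_swap12 (A1 A2 A3 A4 : set CS) :
  partition4 A1 A2 A3 A4 -> partition4 A2 A1 A3 A4.
Proof.
case=> [[d12 d13 d14] d23 d24 d34 cover]; split=> //; first by rewrite setIC.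
by rewrite (setUC A2).
Qed.

Lemma approximately_full4 (G : set (CS -> CS)) (m1 m2 m3 m4 : CS -> CS)
    (P1 P2 P3 P4 : set CS) :
  approximately_full G ->
  [/\ G m1, G m2, G m3 & G m4] ->
  [/\ clopen P1, clopen P2, clopen P3 & clopen P4] ->
  [/\ P1 !=set0, P2 !=set0, P3 !=set0 & P4 !=set0] ->
  [/\ [/\ m1 <> m2, m1 <> m3 & m1 <> m4], m2 <> m3, m2 <> m4 & m3 <> m4] ->
  partition4 P1 P2 P3 P4 -> partition4 (m1 @` P1) (m2 @` P2) (m3 @` P3) (m4 @` P4) ->
  exists2 chi, G chi & [/\ forall x, P1 x -> chi x = m1 x,
    forall x, P2 x -> chi x = m2 x & forall x, P4 x -> chi x = m4 x].
Proof.
move=> AF [G1 G2 G3 G4] [c1 c2 c3 c4] [n1 n2 n3 n4] [[m12 m13 m14] m23 m24 m34]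
  /partition4_sel4 [Pdisj Pcover] /partition4_sel4 [mPdisj mPcover].
have sel4_image i : sel4 m1 m2 m3 m4 i @` sel4 P1 P2 P3 P4 i =
    sel4 (m1 @` P1) (m2 @` P2) (m3 @` P3) (m4 @` P4) i.
  by case: i => [[|[|[|[|i]]]] Hi].
have [||||||| chi Gchi chiE] :=
  AF 4 (sel4 m1 m2 m3 m4) (sel4 P1 P2 P3 P4) (@Ordinal 4 2 isT).
- move=> i j mij; apply: contrapT => ij.
  have neq_sym (f g : CS -> CS) : f <> g -> g <> f by move=> fg /esym.
  exact: (sel4_pairwise (R := fun f g => f <> g) neq_sym m12 m13 m14 m23 m24 m34 ij mij).
- by case=> [[|[|[|[|i]]]] Hi].
- by case=> [[|[|[|[|i]]]] Hi].
- exact: Pdisj.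
- exact: Pcover.
- by move=> i j ij; rewrite !sel4_image; exact: mPdisj.
- by rewrite -mPcover; apply: eq_bigcupr => i _; exact: sel4_image.
exists chi => //; split=> x Px.
- exact: (chiE (@Ordinal 4 0 isT)).
- exact: (chiE (@Ordinal 4 1 isT)).
- exact: (chiE (@Ordinal 4 3 isT)).
Qed.

(* A vigorous group contains a non-trivial element supported in any non-empty
   clopen set W: split W into two halves and push one half into the other. *)
Lemma vigorous_nontrivial (G : set (CS -> CS)) (W : set CS) :
  vigorous G -> clopen W -> W !=set0 -> exists2 u, G u & supp u `<=` W /\ u <> id.
Proof.
move=> vigG cW nW.
have [W1 [W2 [[c1 c2 [x1 W1x1] [x2 W2x2]] [W12 W1UW2]]]] := clopen_split cW nW.
have sub1 : W1 `<=` W by rewrite -W1UW2; apply: subsetUl.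
have sub2 : W2 `<=` W by rewrite -W1UW2; apply: subsetUr.
have [||||||u Gu [uW uW12]] := vigG W W1 W2 cW c1 c2.
- by exists x1.
- exact: sub1.
- by move=> W1W; apply: (disj_false W12 _ W2x2); rewrite W1W; exact: sub2.
- by exists x2.
- exact: sub2.
- by move=> W2W; apply: (disj_false W12 W1x1); rewrite W2W; exact: sub1.
exists u => //; split=> // u_id.
by apply: (disj_false W12 W1x1); rewrite -[x1]/(id x1) -u_id; apply: uW12; exists x1.
Qed.

(* Apply approximate fullness to the
   pieces pD, qD, W and the rest R, mapped by q p^-1, p q^-1 v, u and id, where
   u is a non-trivial element supported in W, and v is u or id, chosen so that
   the four maps are distinct; the piece W is left unconstrained. *)
Lemma swap_approximable (G : set (CS -> CS)) (D W : set CS) (p p' q q' T : CS -> CS) :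
  homeo_subgroup G -> vigorous G -> approximately_full G ->
  G p -> G p' -> G q -> G q' -> cancel p p' -> cancel q q' -> cancel q' q ->
  clopen D -> D !=set0 -> p @` D `&` q @` D = set0 ->
  clopen W -> W !=set0 -> p @` D `&` W = set0 -> q @` D `&` W = set0 ->
  ~` (p @` D `|` q @` D `|` W) !=set0 ->
  (forall x, D x -> T (p x) = q x) -> (forall x, D x -> T (q x) = p x) ->
  (forall x, ~ (p @` D) x -> ~ (q @` D) x -> T x = x) ->
  exists2 chi, G chi & forall x, ~ W x -> chi x = T x.
Proof.
move=> [Ghomeo [Gid [Gcomp Ginv]]] vigG AF Gp Gp' Gq Gq' pK qK q'K cD [d0 Dd0] dpq
  cW nW dpW dqW nR Tp Tq Tout.
have [u Gu [uW u_id]] := vigorous_nontrivial vigG cW nW.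
have [u' _ [uK u'K]] := Ginv u Gu.
set R := ~` (p @` D `|` q @` D `|` W).
have pW d : D d -> ~ W (p d) by move=> Dd; exact: disj_false dpW (imageP p Dd).
have qW d : D d -> ~ W (q d) by move=> Dd; exact: disj_false dqW (imageP q Dd).
have pq0 : p d0 <> q d0 by move=> pq; apply: (disj_false dpq (imageP p Dd0)); rewrite pq.
(* twisting p q^-1 by v = u or v = id keeps it distinct from q p^-1 *)
have [v [Gv vW twist]] : exists v, [/\ G v, supp v `<=` W & q \o p' <> p \o q' \o v].
  have [pq_qp|pq_qp] := pselect (q \o p' = p \o q'); last first.
    by exists id; split=> // x /(_ erefl).
  exists u; split=> // pq_qpu; apply: u_id; apply/funext => x.
  apply: (can_inj q'K); apply: (can_inj pK).
  by have := congr1 (fun f => f x) pq_qpu; rewrite pq_qp /= => <-.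
have vq d : D d -> v (q d) = q d by move=> Dd; apply: (supp_fix vW (qW d Dd)).
have [||||||chi Gchi [chi_p chi_q chi_R]] :=
  @approximately_full4 G (q \o p') (p \o q' \o v) u id (p @` D) (q @` D) W R AF.
- by split=> //; [exact: (Gcomp) | apply: (Gcomp) Gv _; exact: (Gcomp)].
- have cpD : clopen (p @` D) by apply: homeo_clopen => //; exact: Ghomeo.
  have cqD : clopen (q @` D) by apply: homeo_clopen => //; exact: Ghomeo.
  by split=> //; apply: (clopenC set0); do 2 apply: clopenU => //.
- by split=> //; [exists (p d0) | exists (q d0)].
- (* the four maps differ: compare them at the points p d0 and q d0 *)
  split; first split.
  + exact: twist.
  + by move=> /(congr1 (fun f => f (p d0))); rewrite /= pK (supp_fix uW (pW _ Dd0)) => /esym.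
  + by move=> /(congr1 (fun f => f (p d0))); rewrite /= pK => /esym.
  + by move=> /(congr1 (fun f => f (q d0))); rewrite /= vq // qK (supp_fix uW (qW _ Dd0)).
  + by move=> /(congr1 (fun f => f (q d0))); rewrite /= vq // qK.
  + by move=> u_eq; apply: u_id; rewrite u_eq.
- exact: partition4_compl.
- have -> : (q \o p') @` (p @` D) = q @` D.
    by rewrite image_comp; apply: eq_imagel => d _ /=; rewrite pK.
  have -> : (p \o q' \o v) @` (q @` D) = p @` D.
    by rewrite image_comp; apply: eq_imagel => d Dd /=; rewrite vq // qK.
  rewrite (supp_image uK u'K uW) image_id.
  exact/partition4_swap12/partition4_compl.
exists chi => // x Wx.
have [[d Dd <-]|npD] := pselect ((p @` D) x).
  by rewrite chi_p /=; [rewrite pK Tp | exact: imageP].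
have [[d Dd <-]|nqD] := pselect ((q @` D) x).
  by rewrite chi_q /=; [rewrite vq // qK Tq | exact: imageP].
by rewrite chi_R ?Tout // => -[[]|].
Qed.

Lemma approximant_factor (T chi chi' : CS -> CS) (W : set CS) :
  involutive T -> cancel chi chi' -> cancel chi' chi ->
  (forall x, ~ W x -> chi x = T x) ->
  exists e e', [/\ forall x, chi x = T (e x), forall x, chi' x = e' (T x),
                   supp e `<=` W, cancel e e' & cancel e' e].
Proof.
move=> TK chiK chi'K chiT; exists (T \o chi), (chi' \o T); split=> /=.
- by move=> x; rewrite TK.
- by move=> x; rewrite TK.
- by apply: fix_supp => x Wx /=; rewrite chiT // TK.
- by move=> x /=; rewrite TK chiK.
- by move=> x /=; rewrite chi'K TK.
Qed.

(* Commutator trick: two involutions T1, T2 supported in U, which agree with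
   elements of G off disjoint sets W1, W2 outside U, have their commutator
   T1 T2 T1 T2 in G, since the errors supported in W1 and W2 cancel out. *)
Lemma commutator_in_G (G : set (CS -> CS)) (T1 T2 chi1 chi2 : CS -> CS)
    (U W1 W2 : set CS) :
  homeo_subgroup G -> involutive T1 -> involutive T2 ->
  supp T1 `<=` U -> supp T2 `<=` U ->
  W1 `&` U = set0 -> W2 `&` U = set0 -> W1 `&` W2 = set0 ->
  G chi1 -> (forall x, ~ W1 x -> chi1 x = T1 x) ->
  G chi2 -> (forall x, ~ W2 x -> chi2 x = T2 x) ->
  G (T1 \o T2 \o T1 \o T2).
Proof.
move=> [_ [_ [Gcomp Ginv]]] T1K T2K T1U T2U W1U W2U W12 Gchi1 chi1T Gchi2 chi2T.
have [chi1' Gchi1' [chi1K chi1'K]] := Ginv _ Gchi1.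
have [chi2' Gchi2' [chi2K chi2'K]] := Ginv _ Gchi2.
have [e1 [e1' [chi1E chi1'E e1W e1K e1'K]]] := approximant_factor T1K chi1K chi1'K chi1T.
have [e2 [e2' [chi2E chi2'E e2W e2K e2'K]]] := approximant_factor T2K chi2K chi2'K chi2T.
have e1T2 := disjoint_supp_commute (can_inj e1K) (can_inj T2K) e1W T2U W1U.
have e1e2 := disjoint_supp_commute (can_inj e1K) (can_inj e2K) e1W e2W W12.
have e2T1 := disjoint_supp_commute (can_inj e2K) (can_inj T1K) e2W T1U W2U.
have -> : T1 \o T2 \o T1 \o T2 = chi1 \o chi2 \o chi1' \o chi2'.
  apply/funext => x /=.
  by rewrite chi1E chi2E chi1'E chi2'E e1T2 e1e2 e1'K e2T1 e2'K.
by do 3 apply: (Gcomp) => //.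
Qed.

(* A family of maps g i (with left inverses gi i) sends
   a set B onto pairwise disjoint blocks g i B; a permutation s of the indices
   induces the map sending g i b to g (s i) b and fixing all other points. *)
Section BlockPerm.
Variables (I : finType) (g gi : I -> CS -> CS).
Hypothesis gK : forall i, cancel (g i) (gi i).

Definition disjoint_blocks (B : set CS) : Prop :=
  forall i j, i != j -> g i @` B `&` g j @` B = set0.

Definition block_perm (B : set CS) (s : {perm I}) (x : CS) : CS :=
  if [pick i | `[< (g i @` B) x >] ] is Some i then g (s i) (gi i x) else x.

Lemma block_perm_in (B : set CS) (s : {perm I}) (i : I) (b : CS) :
  disjoint_blocks B -> B b -> block_perm B s (g i b) = g (s i) b.
Proof.
move=> disjB Bb; rewrite /block_perm; case: pickP => [j /asboolP gjB | /(_ i)].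
  have [<-|ij] := eqVneq i j; first by rewrite gK.
  by case: (disj_false (disjB _ _ ij) (imageP (g i) Bb) gjB).
by rewrite asboolT //; exact: imageP.
Qed.

Lemma block_perm_out (B : set CS) (s : {perm I}) (x : CS) :
  (forall i, ~ (g i @` B) x) -> block_perm B s x = x.
Proof.
by move=> xB; rewrite /block_perm; case: pickP => // j /asboolP /xB.
Qed.

Lemma block_perm_cases (B : set CS) (x : CS) :
  (exists i, exists2 b, B b & x = g i b) \/ forall i, ~ (g i @` B) x.
Proof.
have [[i [b Bb <-]]|xB] := pselect (exists i, (g i @` B) x).
  by left; exists i, b.
by right=> i gix; apply: xB; exists i.
Qed.

Lemma block_permE (B : set CS) (s : {perm I}) (f : CS -> CS) :
  disjoint_blocks B ->
  (forall i b, B b -> f (g i b) = g (s i) b) ->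
  (forall x, (forall i, ~ (g i @` B) x) -> f x = x) ->
  f = block_perm B s.
Proof.
move=> disjB fB fout; apply/funext => x.
have [[i [b Bb ->]]|xB] := block_perm_cases B x.
  by rewrite fB // block_perm_in.
by rewrite fout // block_perm_out.
Qed.

Lemma block_permM (B : set CS) (s t : {perm I}) (x : CS) :
  disjoint_blocks B ->
  block_perm B (s * t) x = block_perm B t (block_perm B s x).
Proof.
move=> disjB; have [[i [b Bb ->]]|xB] := block_perm_cases B x.
  by rewrite !block_perm_in // permM.
by rewrite !block_perm_out.
Qed.

Lemma block_perm1 (B : set CS) (x : CS) :
  disjoint_blocks B -> block_perm B 1 x = x.
Proof.
move=> disjB.
have [[i [b Bb ->]]|xB] := block_perm_cases B x.
  by rewrite block_perm_in // perm1.
by rewrite block_perm_out.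
Qed.

Lemma block_perm_tpermK (B : set CS) (a b : I) :
  disjoint_blocks B -> involutive (block_perm B (tperm a b)).
Proof. by move=> disjB x; rewrite -block_permM // tperm2 block_perm1. Qed.

Lemma block_perm_tperm_out (B : set CS) (a b : I) (x : CS) :
  disjoint_blocks B -> ~ (g a @` B) x -> ~ (g b @` B) x -> block_perm B (tperm a b) x = x.
Proof.
move=> disjB xa xb; have [[i [d Bd xE]]|xB] := block_perm_cases B x; last first.
  by rewrite block_perm_out.
rewrite xE block_perm_in // tpermD //.
- by apply/eqP => ai; apply: xa; rewrite xE ai; exact: imageP.
- by apply/eqP => bi; apply: xb; rewrite xE bi; exact: imageP.
Qed.

Lemma supp_block_perm (B : set CS) (s : {perm I}) :
  supp (block_perm B s) `<=` \bigcup_i g i @` B.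
Proof.
apply: fix_supp => x xB; apply: block_perm_out => i gix; apply: xB; by exists i.
Qed.

Lemma disjoint_blocks_sub (B B' : set CS) :
  disjoint_blocks B -> B' `<=` B -> disjoint_blocks B'.
Proof.
move=> disjB B'B i j ij.
exact: subsetI_eq0 (image_subset _ B'B) (image_subset _ B'B) (disjB _ _ ij).
Qed.

Lemma blocks_apart (B B1 B2 : set CS) (i j : I) :
  disjoint_blocks B -> B1 `<=` B -> B2 `<=` B -> B1 `&` B2 = set0 ->
  g i @` B1 `&` g j @` B2 = set0.
Proof.
move=> disjB sub1 sub2 B12; have [<-|ij] := eqVneq i j.
  exact: image_disj (can_inj (gK i)) B12.
exact: subsetI_eq0 (image_subset _ sub1) (image_subset _ sub2) (disjB _ _ ij).
Qed.

Lemma block_perm_split (B B1 B2 : set CS) (s : {perm I}) :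
  disjoint_blocks B -> B1 `&` B2 = set0 -> B1 `|` B2 = B ->
  block_perm B s = block_perm B1 s \o block_perm B2 s.
Proof.
move=> disjB B12 B12B.
have sub1 : B1 `<=` B by rewrite -B12B; exact: subsetUl.
have sub2 : B2 `<=` B by rewrite -B12B; exact: subsetUr.
have B21 : B2 `&` B1 = set0 by rewrite setIC.
have disj1 := disjoint_blocks_sub disjB sub1.
have disj2 := disjoint_blocks_sub disjB sub2.
have off (B' B'' : set CS) i b : B' `<=` B -> B'' `<=` B -> B' `&` B'' = set0 ->
    B' b -> forall j, ~ (g j @` B'') (g i b).
  by move=> sub' sub'' B'B'' B'b j; apply: disj_false (blocks_apart i j disjB sub' sub'' B'B'') _.
apply/esym/block_permE => // [i b|x xB] /=.
- rewrite -B12B => -[B1b|B2b].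
  + by rewrite (block_perm_out s (off _ _ _ _ sub1 sub2 B12 B1b)) block_perm_in.
  + by rewrite block_perm_in // (block_perm_out s (off _ _ _ _ sub2 sub1 B21 B2b)).
- have xB' B' : B' `<=` B -> forall i, ~ (g i @` B') x.
    by move=> sub' i gix; exact: xB i (image_subset _ sub' _ gix).
  by rewrite (block_perm_out s (xB' _ sub2)) (block_perm_out s (xB' _ sub1)).
Qed.
End BlockPerm.

Lemma block_tperm_approximable (G : set (CS -> CS)) (I : finType) (g gi : I -> CS -> CS)
    (D E : set CS) (a b c e : I) :
  homeo_subgroup G -> vigorous G -> approximately_full G ->
  (forall i, G (g i)) -> (forall i, G (gi i)) ->
  (forall i, cancel (g i) (gi i)) -> (forall i, cancel (gi i) (g i)) ->
  clopen D -> D !=set0 -> clopen E -> E !=set0 -> D `&` E = set0 ->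
  disjoint_blocks g (D `|` E) -> a != b -> c != a -> c != b ->
  exists2 chi, G chi &
    forall x, ~ (g e @` E) x -> chi x = block_perm g gi D (tperm a b) x.
Proof.
move=> GG vigG AF Gg Ggi gK giK cD [d Dd] cE [x0 Ex0] DE disjDE ab ca cb.
have subD : D `<=` D `|` E by exact: subsetUl.
have subE : E `<=` D `|` E by exact: subsetUr.
have disjD := disjoint_blocks_sub disjDE subD.
have apart i : g i @` D `&` g e @` E = set0 := blocks_apart gK i e disjDE subD subE DE.
apply: (@swap_approximable G D (g e @` E) (g a) (gi a) (g b) (gi b)) => //.
- by exists d.
- exact: disjD.
- by apply: homeo_clopen cE; case: GG => Ghomeo _; exact: Ghomeo.
- by exists (g e x0); exact: imageP.
- exists (g c d) => -[[]|]; apply: disj_false (imageP _ Dd).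
  + exact: disjD.
  + exact: disjD.
  + exact: apart.
- by move=> x Dx; rewrite block_perm_in // tpermL.
- by move=> x Dx; rewrite block_perm_in // tpermR.
- by move=> x; apply: block_perm_tperm_out.
Qed.

(* Block permutations induced by 3-cycles lie in G: split B into two halves;
   on each half the 3-cycle is a commutator of two block transpositions, which
   are approximable using blocks over the other half as free space. *)
Lemma three_cycle_in_G (G : set (CS -> CS)) (I : finType) (g gi : I -> CS -> CS)
    (B : set CS) (a b c : I) :
  homeo_subgroup G -> vigorous G -> approximately_full G ->
  (forall i, G (g i)) -> (forall i, G (gi i)) ->
  (forall i, cancel (g i) (gi i)) -> (forall i, cancel (gi i) (g i)) ->
  clopen B -> B !=set0 -> disjoint_blocks g B -> a != b -> a != c -> b != c ->
  G (block_perm g gi B (tperm a b * tperm a c)).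
Proof.
move=> GG vigG AF Gg Ggi gK giK cB nB disjB ab ac bc.
have [ba ca cb] : [/\ b != a, c != a & c != b] by split; rewrite eq_sym.
have half (D E : set CS) : clopen D -> D !=set0 -> clopen E -> E !=set0 ->
    D `&` E = set0 -> D `|` E = B -> G (block_perm g gi D (tperm a b * tperm a c)).
  move=> cD nD cE nE DE DEB.
  have disjDE : disjoint_blocks g (D `|` E) by rewrite DEB.
  have subD : D `<=` D `|` E by exact: subsetUl.
  have subE : E `<=` D `|` E by exact: subsetUr.
  have disjD := disjoint_blocks_sub disjDE subD.
  have apart e : g e @` E `&` \bigcup_i g i @` D = set0.
    apply/seteqP; split=> // x [gex [i _ gix]].
    exact: disj_false (blocks_apart gK i e disjDE subD subE DE) gix gex.
  have [chi1 Gchi1 chi1E] := @block_tperm_approximable G I g gi D E a b c a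
    GG vigG AF Gg Ggi gK giK cD nD cE nE DE disjDE ab ca cb.
  have [chi2 Gchi2 chi2E] := @block_tperm_approximable G I g gi D E a c b b
    GG vigG AF Gg Ggi gK giK cD nD cE nE DE disjDE ac ba bc.
  rewrite tperm_cycle //.
  have -> : block_perm g gi D (tperm a c * tperm a b * tperm a c * tperm a b) =
      block_perm g gi D (tperm a b) \o block_perm g gi D (tperm a c) \o
      block_perm g gi D (tperm a b) \o block_perm g gi D (tperm a c).
    by apply/funext => x /=; rewrite !block_permM.
  apply: (commutator_in_G (U := \bigcup_i g i @` D)) GG _ _ _ _ (apart a) (apart b) _
    Gchi1 chi1E Gchi2 chi2E.
  - exact: block_perm_tpermK.
  - exact: block_perm_tpermK.
  - exact: supp_block_perm.
  - exact: supp_block_perm.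
  - exact: (disjoint_blocks_sub disjDE subE).
have [B1 [B2 [[c1 c2 n1 n2] [B12 B12B]]]] := clopen_split cB nB.
have B21 : B2 `&` B1 = set0 by rewrite setIC.
rewrite (block_perm_split gK _ disjB B12 B12B).
have B21B : B2 `|` B1 = B by rewrite setUC.
case: GG => _ [_ [Gcomp _]].
exact: Gcomp (half _ _ c2 n2 c1 n1 B21 B21B) (half _ _ c1 n1 c2 n2 B12 B12B).
Qed.

Lemma even_block_perm_in_G (G : set (CS -> CS)) (I : finType) (g gi : I -> CS -> CS)
    (B : set CS) (s : {perm I}) :
  homeo_subgroup G -> vigorous G -> approximately_full G ->
  (forall i, G (g i)) -> (forall i, G (gi i)) ->
  (forall i, cancel (g i) (gi i)) -> (forall i, cancel (gi i) (g i)) ->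
  clopen B -> B !=set0 -> disjoint_blocks g B -> ~~ odd_perm s ->
  G (block_perm g gi B s).
Proof.
move=> GG vigG AF Gg Ggi gK giK cB nB disjB.
case: (GG) => _ [Gid [Gcomp _]].
apply: (even_perm_ind (P := fun s => G (block_perm g gi B s))).
- by rewrite (_ : block_perm g gi B 1 = id) //; apply/funext => x; exact: block_perm1.
- move=> s1 s2 Gs1 Gs2.
  rewrite (_ : block_perm g gi B (s1 * s2) = block_perm g gi B s2 \o block_perm g gi B s1).
    exact: Gcomp.
  by apply/funext => x; exact: block_permM.
- by move=> a b c ab ac bc; exact: three_cycle_in_G.
Qed.

Lemma G_inverses (G : set (CS -> CS)) (I : Type) (g : I -> CS -> CS) :
  homeo_subgroup G -> (forall i, G (g i)) ->
  exists gi : I -> CS -> CS,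
    [/\ forall i, G (gi i), forall i, cancel (g i) (gi i) & forall i, cancel (gi i) (g i)].
Proof.
move=> [_ [_ [_ Ginv]]] Gg.
pose inverse i h := G h /\ cancel (g i) h /\ cancel h (g i).
have [gi giP] : {gi : I -> CS -> CS & forall i, inverse i (gi i)}.
  by apply: (choice (P := inverse)) => i; have [h Gh hK] := Ginv _ (Gg i); exists h.
by exists gi; split=> i; have [? [? ?]] := giP i.
Qed.

(* Refining blocks: if C is the disjoint union of the pieces P c B (c : bool),
   the blocks g i C are the disjoint union of the blocks g i (P c B), and the
   block permutation of s over C is that of the doubled permutation over B. *)
Section NestedBlocks.
Variables (I : finType) (g gi : I -> CS -> CS) (P P' : bool -> CS -> CS).
Variables (C B : set CS).
Hypotheses (gK : forall i, cancel (g i) (gi i)) (giK : forall i, cancel (gi i) (g i)).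
Hypotheses (PK : forall c, cancel (P c) (P' c)) (P'K : forall c, cancel (P' c) (P c)).
Hypotheses (disjC : disjoint_blocks g C) (disjP : disjoint_blocks P B).
Hypothesis CE : C = P false @` B `|` P true @` B.

Definition nested (ic : I * bool) : CS -> CS := g ic.1 \o P ic.2.
Definition nested_inv (ic : I * bool) : CS -> CS := P' ic.2 \o gi ic.1.

Lemma nestedK (ic : I * bool) : cancel (nested ic) (nested_inv ic).
Proof. by move=> x; rewrite /nested /nested_inv /= gK PK. Qed.

Lemma nested_invK (ic : I * bool) : cancel (nested_inv ic) (nested ic).
Proof. by move=> x; rewrite /nested /nested_inv /= P'K giK. Qed.

Lemma piece_sub (c : bool) : P c @` B `<=` C.
Proof. by rewrite CE; case: c; [exact: subsetUr | exact: subsetUl]. Qed.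

Lemma disjoint_nested : disjoint_blocks nested B.
Proof.
move=> [i c] [j d] ijcd; rewrite /nested /= -(image_comp (P c)) -(image_comp (P d)).
have [ij|ij] := eqVneq i j.
  rewrite -ij; apply: image_disj (can_inj (gK i)) _; apply: disjP.
  by apply: contra_neq ijcd => ->; rewrite ij.
exact: subsetI_eq0 (image_subset _ (@piece_sub c)) (image_subset _ (@piece_sub d)) (disjC ij).
Qed.

Lemma block_perm_nested (s : {perm I}) :
  block_perm g gi C s = block_perm nested nested_inv B (pair_perm s).
Proof.
apply: (block_permE nestedK disjoint_nested) => [[i c] b Bb|x xB] /=.
  by rewrite pair_permE /nested /= block_perm_in //; apply: (@piece_sub c); exact: imageP.
apply: block_perm_out => i; rewrite CE image_setU => -[] [_ [b Bb <-] gix].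
- by apply: (xB (i, false)); exists b.
- by apply: (xB (i, true)); exists b.
Qed.
End NestedBlocks.

Lemma even_orbit_split (G : set (CS -> CS)) (C : set CS) :
  homeo_subgroup G -> orbit_even G (orbitG G C) ->
  exists B (P : bool -> CS -> CS), [/\ clopen B, B !=set0, forall c, G (P c),
    disjoint_blocks P B & C = P false @` B `|` P true @` B].
Proof.
move=> [_ [Gid [Gcomp Ginv]]] [B [cB [nB _]] [U [V [mu [nu [[_ _ Gmu Gnu] [eU eV UV0 _ eC]]]]]]].
have orbit_rep (X Y : set CS) : orbitG G X = orbitG G Y -> exists2 a, G a & X = a @` Y.
  move=> XY; have : orbitG G X X by exists id => //; exact: image_id.
  by rewrite XY => -[a Ga <-]; exists a.
have [a Ga UE] := orbit_rep _ _ (esym eU); have [b Gb VE] := orbit_rep _ _ (esym eV).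
have [k Gk CE] := orbit_rep _ _ eC; have [k' _ [kK _]] := Ginv k Gk.
have pieceE (m c : CS -> CS) : (k \o m \o c) @` B = k @` (m @` (c @` B)).
  by rewrite !image_comp.
have kUV0 := image_disj (can_inj kK) UV0.
exists B, (fun c => if c then k \o nu \o b else k \o mu \o a); split=> //.
- by case; do 2 apply: (Gcomp).
- by move=> [] [] //= _; rewrite !pieceE -UE -VE // setIC.
- by rewrite CE image_setU /= !pieceE -UE -VE.
Qed.

Unset Implicit Arguments.

Theorem lemma3p5 (G : set (CS -> CS)) (C : set CS) (n : nat)
  (gam : 'I_n -> (CS -> CS)) (s : 'S_n) (delta : CS -> CS) :
  homeo_subgroup G -> vigorous G -> approximately_full G ->
  KC C ->
  injective gam -> (forall i, G (gam i)) ->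
  (forall i j, gam i @` C `&` gam j @` C !=set0 -> gam i = gam j) ->
  homeo delta ->
  supp delta `<=` \bigcup_i (gam i @` C) ->
  (forall i x, C x -> delta (gam i x) = gam (s i) x) ->
  orbit_even G (orbitG G C) \/ ~~ odd_perm s ->
  G delta.
Proof.
move=> GG vigG AF [cC [nC _]] gam_inj Ggam gam_meet _ supp_delta delta_gam parity.
have [gi [Ggi gamK giK]] := G_inverses GG Ggam.
have disjC : disjoint_blocks gam C.
  move=> i j ij; apply/seteqP; split=> // x meet.
  by case/eqP: ij; apply: gam_inj; apply: gam_meet; exists x.
have -> : delta = block_perm gam gi C s.
  apply: (block_permE gamK disjC) => [i x Cx|x xC]; first exact: delta_gam.
  by apply: (supp_fix supp_delta) => -[i _ gix]; exact: xC i gix.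
case: parity => [/(even_orbit_split GG) [B [P [cB nB GP disjP CE]]]|even_s].
  have [P' [GP' PK P'K]] := G_inverses GG GP.
  have [_ [_ [Gcomp _]]] := GG.
  rewrite (block_perm_nested gamK PK disjC disjP CE).
  apply: (even_block_perm_in_G GG vigG AF _ _ _ _ cB nB _ (pair_perm_even s)).
  - by move=> [i c]; apply: Gcomp.
  - by move=> [i c]; apply: Gcomp.
  - exact: nestedK gamK PK.
  - exact: nested_invK giK P'K.
  - exact: disjoint_nested gamK disjC disjP CE.
exact: even_block_perm_in_G.
Qed.
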